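(* For all integers $k\ge2$ and $m\ge1$, \[u\big((2^k-1)m-k,\;(2^k-1)m\big)=\varepsilon\big((2^k-1)m-k,\;(2^k-1)m\big)=2^{k-1}m.\]
   Context: All matrices are binary. For a nonempty set $S$ of columns of a binary matrix, let $z$ be the sum over the integers of the columns in $S$. $S$ is called $1$-free if no entry of $z$ equals $1$, and even if all entries of $z$ are even. For a binary $m'\times n'$ matrix $A$ with $m'<n'$: $\varepsilon(A)$ is the smallest cardinality of a nonempty even set of columns, and $u(A)$ the smallest cardinality of a nonempty $1$-free set of columns. For $m'<n'$, $\varepsilon(m',n')$ and $u(m',n')$ are the maxima of $\varepsilon(A)$, resp. $u(A)$, over all binary $m'\times n'$ matrices. *)

From mathcomp Require Import all_boot all_order all_algebra.
Set Implicit Arguments. Unset Strict Implicit. Unset Printing Implicit Defensive.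

Definition colsum (m n : nat) (A : 'M[bool]_(m, n)) (S : {set 'I_n}) (i : 'I_m) : nat :=
  \sum_(j in S) (A i j : nat).

Definition one_free (m n : nat) (A : 'M[bool]_(m, n)) (S : {set 'I_n}) : bool :=
  [forall i, colsum A S i != 1%N].

Definition even_set (m n : nat) (A : 'M[bool]_(m, n)) (S : {set 'I_n}) : bool :=
  [forall i, ~~ odd (colsum A S i)].

(* Smallest cardinality of a nonempty set satisfying P (default n if none;
   for m < n such sets always exist, so the default is never used). *)
Definition min_card (n : nat) (P : {set 'I_n} -> bool) : nat :=
  \big[minn/n]_(S : {set 'I_n} | (S != set0) && P S) #|S|.

Definition epsA (m n : nat) (A : 'M[bool]_(m, n)) : nat := min_card (even_set A).
Definition uA (m n : nat) (A : 'M[bool]_(m, n)) : nat := min_card (one_free A).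

Definition eps_mn (m n : nat) : nat := \max_(A : 'M[bool]_(m, n)) epsA A.
Definition u_mn (m n : nat) : nat := \max_(A : 'M[bool]_(m, n)) uA A.

From mathcomp Require Import all_boot all_order all_algebra.
From mathcomp Require Import zify.
Set Implicit Arguments. Unset Strict Implicit. Unset Printing Implicit Defensive.

(* Upper bound: two column sets with the same syndrome (the parity vector of
   their column sums) differ by an even set.  An m' x n matrix has 2^n column
   sets but only 2^m' syndromes, so for n >= m' + k some syndrome class holds
   at least 2^k sets; Plotkin's bound for this family, whose pairwise
   distances are at least eps(A), gives eps(A) <= 2^(k-1) m when
   n = (2^k - 1) m.
   Lower bound: the rows of extremal_mx force every 1-free column set to be
   periodic modulo N = 2^k - 1, and one period, read as a set P of nonzero
   vectors of F_2^k, never meets a line {a, b, a + b} (a a power of 2 exceeding b) in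
   exactly one point.  A nonempty such P has at least 2^(k-1) points, so every
   1-free set has at least 2^(k-1) m columns.  As u <= eps, both equal
   2^(k-1) m. *)

Lemma leq_exp2_sub1 k : k <= 2 ^ k - 1.
Proof. by rewrite leq_subRL ?expn_gt0 // add1n ltn_expl. Qed.

Section MinCard.
Variable n : nat.
Implicit Types (P Q : {set 'I_n} -> bool) (S : {set 'I_n}).

Lemma min_card_le P S : S != set0 -> P S -> min_card P <= #|S|.
Proof.
move=> S0 PS; rewrite /min_card -minEnat.
by apply: (Order.TotalTheory.bigmin_le_cond n (P := fun S => (S != set0) && P S)); rewrite S0.
Qed.

Lemma leq_min_card P d :
  d <= n -> (forall S, S != set0 -> P S -> d <= #|S|) -> d <= min_card P.
Proof.
move=> dn lbP; rewrite /min_card; elim/big_ind: _ => //.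
  by move=> x y dx dy; rewrite leq_min dx.
by move=> S /andP[]; apply: lbP.
Qed.

Lemma min_card_sub P Q : (forall S, P S -> Q S) -> min_card Q <= min_card P.
Proof.
move=> PQ; apply: leq_min_card => [|S S0 /PQ]; last exact: min_card_le.
rewrite /min_card; elim/big_ind: _ => // [x y xn _|S _]; first by rewrite geq_min xn.
by rewrite -[n in _ <= n]card_ord max_card.
Qed.

End MinCard.

Lemma uA_le_epsA m n (A : 'M[bool]_(m, n)) : uA A <= epsA A.
Proof.
apply: min_card_sub => S /forallP evenS; apply/forallP => i.
by apply: contraNneq (evenS i) => ->.
Qed.

Section SymmetricDifference.
Variable T : finType.
Implicit Types A B C : {set T}.

Definition symdiff A B : {set T} := (A :\: B) :|: (B :\: A).

Lemma in_symdiff A B x : (x \in symdiff A B) = ((x \in A) != (x \in B)).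
Proof. by rewrite !inE; case: (x \in A); case: (x \in B). Qed.

Lemma symdiff_eq0 A B : (symdiff A B == set0) = (A == B).
Proof.
apply/eqP/eqP => [AB0|->]; apply/setP => x; last by rewrite in_symdiff inE eqxx.
by apply/eqP; rewrite -[_ == _]negbK -in_symdiff AB0 inE.
Qed.

Lemma card_symdiff_sum A B : #|symdiff A B| = \sum_x ((x \in A) != (x \in B) : nat).
Proof. by rewrite -sum1_card big_mkcond; apply: eq_bigr => x _; rewrite in_symdiff. Qed.

Lemma card_symdiff A B : #|symdiff A B| + 2 * #|A :&: B| = #|A| + #|B|.
Proof.
have AB0 : (A :\: B) :&: (B :\: A) = set0.
  by apply/setP => x; rewrite !inE; case: (x \in A); case: (x \in B).
have := cardsUI (A :\: B) (B :\: A); rewrite AB0 cards0 addn0 -/(symdiff A B).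
rewrite -[#|A|](cardsID B) -[#|B|](cardsID A) setIC; lia.
Qed.

Lemma setI_symdiff A B C : symdiff A B :&: C = symdiff (A :&: C) (B :&: C).
Proof. by apply/setP => x; rewrite !inE; case: (x \in A); case: (x \in B); case: (x \in C). Qed.

End SymmetricDifference.

Section Plotkin.
Variables (n d : nat) (F : {set {set 'I_n}}).
Hypothesis dist_ge : forall A B, A \in F -> B \in F -> A != B -> d <= #|symdiff A B|.

Lemma sum_dist_ge : #|F| * (#|F| - 1) * d <= \sum_(A in F) \sum_(B in F) #|symdiff A B|.
Proof.
rewrite -mulnA -sum_nat_const; apply: leq_sum => A AF.
rewrite (bigD1 A) //=; have /eqP-> : symdiff A A == set0 by rewrite symdiff_eq0.
rewrite cards0 add0n (cardsD1 A F) AF add1n subn1 /= -sum_nat_const.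
rewrite [X in _ <= X](eq_bigl (mem (F :\ A))) => [|B]; last by rewrite !inE andbC.
by apply: leq_sum => B; rewrite !inE => /andP[BA BF]; apply: dist_ge; rewrite // eq_sym.
Qed.

Lemma sum_dist_le : 2 * \sum_(A in F) \sum_(B in F) #|symdiff A B| <= n * #|F| ^ 2.
Proof.
under eq_bigr => A _ do under eq_bigr => B _ do rewrite card_symdiff_sum.
under eq_bigr => A _ do rewrite exchange_big.
rewrite exchange_big big_distrr.
apply: (@leq_trans (\sum_(x < n) #|F| ^ 2)); last by rewrite sum_nat_const card_ord.
apply: leq_sum => x _.
pose a := \sum_(A in F) (x \in A : nat); pose c := \sum_(A in F) (x \notin A : nat).
have ac : a + c = #|F| by rewrite -big_split -sum1_card; apply: eq_bigr => A _; case: (x \in A).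
have inner (A : {set 'I_n}) :
    \sum_(B in F) ((x \in A) != (x \in B) : nat) = (x \in A) * c + (x \notin A) * a.
  by case: (x \in A); rewrite /= ?mul0n ?mul1n ?addn0; apply: eq_bigr => B _; case: (x \in B).
rewrite /= (eq_bigr _ (fun A _ => inner A)) big_split -!big_distrl /= -/a -/c.
by rewrite -ac (mulnC c) addnn -mul2n mulnA; exact: nat_AGM2.
Qed.

Lemma plotkin_bound : 2 * (#|F| * (#|F| - 1) * d) <= n * #|F| ^ 2.
Proof. exact: leq_trans (leq_mul (leqnn 2) sum_dist_ge) sum_dist_le. Qed.

End Plotkin.

Lemma dist_le_of_plotkin p m M n d : 0 < p -> 2 * p <= M -> n <= (2 * p - 1) * m ->
  2 * (M * (M - 1) * d) <= n * M ^ 2 -> d <= p * m.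
Proof.
move=> p0 pM nm plot.
have {plot} : 2 * ((M - 1) * d) <= n * M.
  rewrite -(@leq_pmul2l M); last lia.
  by move: plot; rewrite mulnCA !mulnA (mulnC M n) -mulnA; lia.
move/leq_trans/(_ (leq_mul nm (leqnn M))).
nia.
Qed.

Lemma colsum_card m n (A : 'M[bool]_(m, n)) S i : colsum A S i = #|S :&: [set j | A i j]|.
Proof.
rewrite /colsum -sum1_card big_mkcond [RHS]big_mkcond; apply: eq_bigr => j _.
by rewrite !inE; case: (j \in S); case: (A i j).
Qed.

Lemma exists_large_fiber (aT rT : finType) (f : aT -> rT) b :
  b.-1 * #|rT| < #|aT| -> exists y, b <= #|[set x | f x == y]|.
Proof.
move=> large; apply/existsP; apply: contraTT large; rewrite negb_exists => /forallP small.
rewrite -leqNgt -sum1_card (partition_big f predT) //= mulnC -sum_nat_const leq_sum // => y _.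
by rewrite sum1dep_card -ltnS (leq_trans _ (leqSpred _)) // ltnNge.
Qed.

Definition syndrome m n (A : 'M[bool]_(m, n)) (S : {set 'I_n}) : {ffun 'I_m -> bool} :=
  [ffun i => odd (colsum A S i)].

Lemma even_set_symdiff m n (A : 'M[bool]_(m, n)) S T :
  syndrome A S = syndrome A T -> even_set A (symdiff S T).
Proof.
move=> /ffunP synST; apply/forallP => i; have := synST i.
rewrite !ffunE !colsum_card setI_symdiff.
move: (card_symdiff (S :&: [set j | A i j]) (T :&: [set j | A i j])) => /(congr1 odd).
by rewrite mul2n !oddD odd_double addbF => -> <-; rewrite addbb.
Qed.

Lemma epsA_le k m m' n (A : 'M[bool]_(m', n)) :
  0 < k -> m' + k <= n -> n <= (2 ^ k - 1) * m -> epsA A <= 2 ^ k.-1 * m.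
Proof.
move=> k0 m'k nm.
have [s large] : exists s, 2 ^ k <= #|[set S | syndrome A S == s]|.
  apply: exists_large_fiber.
  rewrite card_ffun card_bool !card_ord -cardsT -powersetT card_powerset cardsT card_ord.
  apply: leq_trans (leq_pexp2l _ m'k) => //; rewrite expnD mulnC ltn_pmul2l ?expn_gt0 //.
  by rewrite prednK ?expn_gt0.
have dist S T : S \in [set S | syndrome A S == s] -> T \in [set S | syndrome A S == s] ->
    S != T -> epsA A <= #|symdiff S T|.
  rewrite !inE => /eqP synS /eqP synT ST; apply: min_card_le; first by rewrite symdiff_eq0.
  by apply: even_set_symdiff; rewrite synS synT.
have pow2 : 2 * 2 ^ k.-1 = 2 ^ k by rewrite -expnS prednK.
apply: (dist_le_of_plotkin _ _ _ (plotkin_bound dist)); rewrite ?pow2 ?expn_gt0 //.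
Qed.

Definition one_free_on_triples k (P : nat -> bool) :=
  forall h y, h < k -> 0 < y < 2 ^ h -> P (2 ^ h + y) + P y + P (2 ^ h) != 1.

Lemma sum_halves H (F : nat -> nat) :
  0 < H -> \sum_(1 <= x < 2 * H) F x = F H + \sum_(1 <= y < H) (F y + F (H + y)).
Proof.
move=> H0; rewrite mul2n -addnn (@big_cat_nat _ _ _ H) ?leq_addr //= [X in _ + X]big_ltn; last lia.
rewrite -(add1n H) big_addn addnK big_split /= addnCA.
by congr (_ + (_ + _)); apply: eq_bigr => y _; rewrite addnC.
Qed.

Lemma sum_one_free_on_triples k (P : nat -> bool) :
  one_free_on_triples k P -> (exists2 x, 0 < x < 2 ^ k & P x) ->
  2 ^ k.-1 <= \sum_(1 <= x < 2 ^ k) P x.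
Proof.
elim: k => [|k IHk] freeP [x /andP[x0 xk] Px] /=; first by move: xk; rewrite expn0; lia.
set H := 2 ^ k; have H0 : 0 < H by rewrite expn_gt0.
rewrite expnS -/H sum_halves // in xk *.
have freeH y : 0 < y < H -> P (H + y) + P y + P H != 1 by apply: freeP.
(* Split [1, 2H) at H: if P H, each pair {y, H + y} meets P; otherwise P is
   H-periodic and the induction hypothesis applies to [1, H). *)
case PH : (P H).
  apply: leq_trans (_ : 1 + \sum_(1 <= y < H) 1 <= _); first by rewrite sum_nat_const_nat; lia.
  rewrite leq_add2l big_nat_cond [X in _ <= X]big_nat_cond leq_sum // => y /andP[/freeH].
  by rewrite PH; case: (P y); case: (P (H + y)).
have shiftH y : 0 < y < H -> P (H + y) = P y.
  by move/freeH; rewrite PH; case: (P y); case: (P (H + y)).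
have [x' x'_range Px'] : exists2 x', 0 < x' < H & P x'.
  have [xH|Hx] := ltnP x H; first by exists x; rewrite ?x0.
  have x_neq_H : x != H by apply: contraTneq Px => ->; rewrite PH.
  by exists (x - H); [lia | rewrite -shiftH ?subnKC //; lia].
have k0 : 0 < k by rewrite lt0n; apply: contraTneq x'_range; rewrite /H => ->; lia.
have IH := IHk (fun h y hk => freeP h y (ltnW hk)) (ex_intro2 _ _ x' x'_range Px').
rewrite add0n big_nat_cond (eq_bigr (fun y => P y + P y)) -?big_nat_cond; last first.
  by move=> y /andP[/shiftH ->].
by rewrite big_split /= addnn -mul2n (_ : H = 2 * 2 ^ k.-1) ?leq_mul2l // -expnS prednK.
Qed.

Definition has_col n (S : {set 'I_n}) (x : nat) : bool := [exists j in S, val j == x].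

Lemma sum_eq_has_col n (S : {set 'I_n}) x : \sum_(j in S) (val j == x : nat) = has_col S x.
Proof.
have [/existsP[j0 /andP[j0S /eqP j0x]] | noS] := boolP (has_col S x).
  rewrite (bigD1 j0) //= j0x eqxx big1 // => j /andP[_ jj0].
  by rewrite -j0x val_eqE (negbTE jj0).
rewrite big1 // => j jS; apply/eqP; rewrite eqb0; apply: contraNN noS => /eqP jx.
by apply/existsP; exists j; rewrite jS jx eqxx.
Qed.

Lemma sum_mem_has_col n (S : {set 'I_n}) (s : seq nat) :
  uniq s -> \sum_(j in S) (val j \in s : nat) = \sum_(x <- s) has_col S x.
Proof.
move=> us; under eq_bigr => j _ do rewrite -(count_uniq_mem _ us) -sum1_count big_mkcond /=.
rewrite exchange_big /=; apply: eq_bigr => x _; rewrite -sum_eq_has_col.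
by apply: eq_bigr => j _; rewrite eq_sym; case: eqP.
Qed.

Lemma card_has_col n (S : {set 'I_n}) : #|S| = \sum_(0 <= x < n) has_col S x.
Proof.
rewrite -sum1_card big_mkcond big_mkord; apply: eq_bigr => j _.
have -> : has_col S j = (j \in S); last by case: (j \in S).
by apply/existsP/idP => [[j' /andP[j'S /eqP/val_inj <-]] | jS] //; exists j; rewrite jS /=.
Qed.

Lemma sum_periodic N m (F : nat -> nat) :
  (forall x, x < m * N -> F x = F (x %% N)) ->
  \sum_(0 <= x < m * N) F x = m * \sum_(0 <= x < N) F x.
Proof.
elim: m => [_|m IHm Fper]; first by rewrite !mul0n big_geq.
have mN_le : m * N <= m.+1 * N by rewrite leq_mul2r leqnSn orbT.
rewrite (@big_cat_nat _ _ _ (m * N)) // IHm => [|x xm]; last exact/Fper/(leq_trans xm).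
rewrite mulSnr -{1}[m * N]add0n big_addn mulSnr addKn; congr (_ + _).
apply: eq_big_nat => x /andP[_ xN]; rewrite Fper; last by rewrite mulSnr addnC ltn_add2l.
by rewrite addnC modnMDl modn_small.
Qed.

(* Columns are numbered from 0, so column x.-1 stands for the vector x.  The
   first n - N rows tie column i + N to column i mod N; the last N - k rows are
   the lines {a + y, y, a} with a = 2^h > y. *)
Definition triple_lines k : seq (seq nat) :=
  [seq [:: (2 ^ h + y).-1; y.-1; (2 ^ h).-1] | h <- iota 0 k, y <- iota 1 (2 ^ h).-1].

Lemma size_triple_lines k : size (triple_lines k) + k + 1 = 2 ^ k.
Proof.
rewrite size_allpairs_dep; elim: k => [//|k IHk].
have -> : iota 0 k.+1 = iota 0 k ++ [:: k] by rewrite -addn1 iotaD.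
rewrite map_cat sumn_cat /= size_iota expnS; have k0 : 0 < 2 ^ k by rewrite expn_gt0.
lia.
Qed.

Lemma mem_triple_lines k h y : h < k -> 0 < y < 2 ^ h ->
  [:: (2 ^ h + y).-1; y.-1; (2 ^ h).-1] \in triple_lines k.
Proof.
move=> hk hy; apply/allpairsPdep; exists h, y; rewrite !mem_iota /=.
have h0 : 0 < 2 ^ h by rewrite expn_gt0.
by split => //; lia.
Qed.

Definition row_support k m i : seq nat :=
  let N := 2 ^ k - 1 in let n := N * m in
  if i < n - N then [:: i + N; i %% N] else nth [::] (triple_lines k) (i - (n - N)).

Definition extremal_mx k m : 'M[bool]_((2 ^ k - 1) * m - k, (2 ^ k - 1) * m) :=
  \matrix_(i, j) (val j \in row_support k m i).

Section ExtremalMatrix.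
Variables (k m : nat) (S : {set 'I_((2 ^ k - 1) * m)}).
Hypotheses (k0 : 0 < k) (m0 : 0 < m) (freeS : one_free (extremal_mx k m) S).
Local Notation N := (2 ^ k - 1).
Local Notation n := ((2 ^ k - 1) * m).

Let k_le_N : k <= N := leq_exp2_sub1 k.
Let N_gt0 : 0 < N := leq_trans k0 k_le_N.
Let N_le_n : N <= n. Proof. by rewrite leq_pmulr. Qed.

Lemma row_support_one_free (i : 'I_(n - k)) :
  uniq (row_support k m i) -> \sum_(x <- row_support k m i) has_col S x != 1.
Proof.
move=> us; move/forallP: freeS => /(_ i); rewrite /colsum -sum_mem_has_col //.
by under eq_bigr => j _ do rewrite mxE.
Qed.

Lemma has_col_mod x : x < n -> has_col S x = has_col S (x %% N).
Proof.
move=> xn; have [xN|Nx] := ltnP x N; first by rewrite modn_small.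
have i_lt : x - N < n - k by lia.
have xmod : (x - N) %% N = x %% N by rewrite -{2}(subnK Nx) modnDr.
have := row_support_one_free (i := Ordinal i_lt); rewrite /row_support /=.
have -> : x - N < n - N by lia.
rewrite subnK // xmod !big_cons big_nil addn0 /= andbT inE.
have -> : x != x %% N by have := ltn_pmod x N_gt0; lia.
by case: (has_col S x); case: (has_col S (x %% N)) => // /(_ isT).
Qed.

Lemma one_free_on_triples_has_col : one_free_on_triples k (fun x => has_col S x.-1).
Proof.
move=> h y hk hy /=; have h0 : 0 < 2 ^ h by rewrite expn_gt0.
have t_in := mem_triple_lines hk hy; rewrite -index_mem in t_in.
set t := [:: _; _; _] in t_in *; set r := index t _ in t_in.
have i_lt : n - N + r < n - k.
  have := size_triple_lines k; move: t_in; clearbody r.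
  by move: (size _) (n) N_le_n => s nn; lia.
have := row_support_one_free (i := Ordinal i_lt); rewrite /row_support /=.
have -> : n - N + r < n - N = false by lia.
rewrite addKn nth_index -?index_mem // !big_cons big_nil addn0 addnA.
by apply; rewrite /t /= !inE; lia.
Qed.

Lemma card_one_free_extremal_ge : S != set0 -> 2 ^ k.-1 * m <= #|S|.
Proof.
case/set0Pn => j jS; rewrite card_has_col [in X in \sum_(0 <= x < X) _]mulnC.
rewrite sum_periodic => [|x]; last by rewrite mulnC => /has_col_mod ->.
rewrite [m * _]mulnC leq_mul2r; apply/orP; right.
have witness : exists2 x, 0 < x < 2 ^ k & has_col S x.-1.
  exists (j %% N).+1; first by have := ltn_pmod j N_gt0; lia.
  by rewrite /= -has_col_mod //; apply/existsP; exists j; rewrite jS eqxx.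
have := sum_one_free_on_triples one_free_on_triples_has_col witness.
by rewrite big_add1 -[(2 ^ k).-1]subn1.
Qed.

End ExtremalMatrix.

Lemma uA_extremal_mx_ge k m : 0 < k -> 0 < m -> 2 ^ k.-1 * m <= uA (extremal_mx k m).
Proof.
move=> k0 m0; apply: leq_min_card => [|S S0 freeS]; last exact: card_one_free_extremal_ge.
have pow_gt0 : 0 < 2 ^ k.-1 by rewrite expn_gt0.
rewrite leq_mul2r -[in X in _ <= X](prednK k0) expnS; apply/orP; right.
by move: (2 ^ k.-1) pow_gt0 => p; lia.
Qed.

Theorem theorem6p3 (k m : nat) (hk : 2 <= k) (hm : 1 <= m) :
  u_mn ((2 ^ k - 1) * m - k) ((2 ^ k - 1) * m) = 2 ^ k.-1 * m /\
  eps_mn ((2 ^ k - 1) * m - k) ((2 ^ k - 1) * m) = 2 ^ k.-1 * m.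
Proof.
have k0 : 0 < k by apply: leq_trans hk.
have rows_k : (2 ^ k - 1) * m - k + k <= (2 ^ k - 1) * m.
  by rewrite subnK // (leq_trans (leq_exp2_sub1 k)) ?leq_pmulr.
have eps_le A : epsA A <= 2 ^ k.-1 * m := epsA_le A k0 rows_k (leqnn _).
have u_ge := uA_extremal_mx_ge k0 hm.
rewrite /u_mn /eps_mn; split; apply/eqP; rewrite eqn_leq; apply/andP; split.
- by apply/bigmax_leqP => A _; exact: leq_trans (uA_le_epsA A) (eps_le A).
- exact: (bigmax_sup (extremal_mx k m) isT u_ge).
- by apply/bigmax_leqP => A _; exact: eps_le.
- exact: (bigmax_sup (extremal_mx k m) isT (leq_trans u_ge (uA_le_epsA _))).
Qed.
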